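(* Let $B\in\mathbb{R}^{N_x\times N_x}$ be symmetric positive definite, $\bar x\in\mathbb{R}^{N_x}$, and $V(x) = \frac12(x-\bar x)^{\rm T}B^{-1}(x-\bar x)$ (i.e. $U\equiv0$). For step size $\Delta\tau>0$ consider the scheme $$p_{n+1/2} = p_n - \tfrac{\Delta\tau}{2}\nabla_xV(x_n),\quad x_{n+1} = x_n + \Delta\tau\,\widetilde M^{-1}p_{n+1/2},\quad p_{n+1} = p_{n+1/2}-\tfrac{\Delta\tau}{2}\nabla_xV(x_{n+1}),$$ with $\widetilde M = I + \frac{\Delta\tau^2}{4}B^{-1}$. Then for all $\Delta\tau>0$ and all $(x_n,p_n)$, $$\mathcal{H}(x_{n+1},p_{n+1}) = \mathcal{H}(x_n,p_n),\qquad \mathcal{H}(x,p) := \tfrac12p^{\rm T}p + V(x).$$ *)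

From HB Require Import structures.
From mathcomp Require Import all_boot all_order all_algebra.
Set Implicit Arguments. Unset Strict Implicit. Unset Printing Implicit Defensive.
Import Order.TTheory GRing.Theory Num.Theory.
Local Open Scope ring_scope.

Section Defs.
Variables (R : realFieldType) (n : nat).

Definition sym_posdef (B : 'M[R]_n) : Prop :=
  B^T = B /\ forall v : 'cV[R]_n, v != 0 -> 0 < (v^T *m B *m v) 0 0.

Definition Vpot (B : 'M[R]_n) (xbar x : 'cV[R]_n) : R :=
  2^-1 * ((x - xbar)^T *m invmx B *m (x - xbar)) 0 0.

(* grad_x V(x) = B^{-1} (x - xbar)  (B, hence B^{-1}, symmetric) *)
Definition gradV (B : 'M[R]_n) (xbar x : 'cV[R]_n) : 'cV[R]_n :=
  invmx B *m (x - xbar).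

Definition Ham (B : 'M[R]_n) (xbar x p : 'cV[R]_n) : R :=
  2^-1 * (p^T *m p) 0 0 + Vpot B xbar x.

Definition Mtilde (B : 'M[R]_n) (dt : R) : 'M[R]_n :=
  1%:M + (dt ^+ 2 / 4) *: invmx B.

End Defs.

(* Write A = B^-1, y = x_n - xbar and d = x_{n+1} - x_n.  The position update
   says precisely Mtilde d = dt p_{n+1/2}, i.e. dt p_{n+1/2} = d + (dt^2/4) A d.
   The kinetic energy changes by <p1 - p0, p1 + p0>/2 with p1 - p0 = -(dt/2) A (2y + d)
   and p1 + p0 = 2 p_{n+1/2} - (dt/2) A d; substituting dt p_{n+1/2}, the dt^2/4
   terms cancel exactly, leaving -<2y + d, A d>/2, which is minus the change
   <2y + d, A d>/2 of the potential energy.  Positive definiteness of B is only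
   needed to make B and Mtilde invertible. *)

From HB Require Import structures.
From mathcomp Require Import all_boot all_order all_algebra.
From mathcomp Require Import lra.
Import Order.TTheory GRing.Theory Num.Theory.
Local Open Scope ring_scope.

Set Implicit Arguments.
Unset Strict Implicit.

Section DotProduct.
Variables (R : realFieldType) (n : nat).
Implicit Types (u v w : 'cV[R]_n) (A : 'M[R]_n).

Definition dot u w : R := (u^T *m w) 0 0.

Lemma dotDl u v w : dot (u + v) w = dot u w + dot v w.
Proof. by rewrite /dot linearD /= mulmxDl mxE. Qed.

Lemma dotDr u v w : dot u (v + w) = dot u v + dot u w.
Proof. by rewrite /dot mulmxDr mxE. Qed.

Lemma dotZl a u w : dot (a *: u) w = a * dot u w.
Proof. by rewrite /dot linearZ /= -scalemxAl mxE. Qed.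

Lemma dotZr a u w : dot u (a *: w) = a * dot u w.
Proof. by rewrite /dot -scalemxAr mxE. Qed.

Lemma dotNl u w : dot (- u) w = - dot u w.
Proof. by rewrite -scaleN1r dotZl mulN1r. Qed.

Lemma dotNr u w : dot u (- w) = - dot u w.
Proof. by rewrite -scaleN1r dotZr mulN1r. Qed.

Lemma dotC u w : dot u w = dot w u.
Proof. by rewrite /dot -[w^T *m u]trmxK trmx_mul trmxK [in RHS]mxE. Qed.

Lemma dot_mulmx_sym A u w : A^T = A -> dot (A *m u) w = dot u (A *m w).
Proof. by move=> AT; rewrite /dot trmx_mul AT mulmxA. Qed.

Lemma dot_ge0 u : 0 <= dot u u.
Proof.
by rewrite /dot mxE; apply: sumr_ge0 => i _; rewrite mxE -expr2 sqr_ge0.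
Qed.

Lemma sym_posdefP A :
  sym_posdef A <-> A^T = A /\ forall v, v != 0 -> 0 < dot v (A *m v).
Proof.
by split=> -[AT Apos]; split=> // v /Apos; rewrite /dot mulmxA.
Qed.

End DotProduct.

Section PositiveDefinite.
Variables (R : realFieldType) (n : nat).
Implicit Types (A : 'M[R]_n) (k : R).

Lemma sym_posdef_unitmx A : sym_posdef A -> A \in unitmx.
Proof.
move=> /sym_posdefP[AT Apos]; rewrite unitmxE unitfE; apply/det0P => -[v vn0 vA].
have vA' : A *m v^T = 0 by rewrite -{1}AT -trmx_mul vA trmx0.
by have := Apos v^T; rewrite trmx_eq0 vn0 vA' /dot mulmx0 mxE ltxx => /(_ isT).
Qed.

Lemma sym_posdef_invmx A : sym_posdef A -> sym_posdef (invmx A).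
Proof.
move=> Aspd; have Au := sym_posdef_unitmx Aspd.
move: Aspd => /sym_posdefP[AT Apos]; apply/sym_posdefP; split.
  by rewrite trmx_inv AT.
move=> v vn0; set w := invmx A *m v.
have vE : v = A *m w by rewrite /w mulmxA mulmxV // mul1mx.
have wn0 : w != 0 by apply: contra vn0 => /eqP w0; rewrite vE w0 mulmx0.
by rewrite {1}vE dot_mulmx_sym //; apply: Apos.
Qed.

Lemma sym_posdef_1D A k : 0 < k -> sym_posdef A -> sym_posdef (1%:M + k *: A).
Proof.
move=> k_gt0 /sym_posdefP[AT Apos]; apply/sym_posdefP; split.
  by rewrite linearD /= trmx1 linearZ /= AT.
move=> v vn0; rewrite mulmxDl mul1mx -scalemxAl dotDr dotZr.
exact: ltr_wpDl (dot_ge0 v) (mulr_gt0 k_gt0 (Apos v vn0)).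
Qed.

End PositiveDefinite.

Lemma leapfrog_quadratic_energy (R : realFieldType) (n : nat) (A : 'M[R]_n)
    (dt : R) (y d q : 'cV[R]_n) :
  A^T = A -> dt *: q = d + (dt ^+ 2 / 4) *: (A *m d) ->
  let p0 := q + (dt / 2) *: (A *m y) in
  let p1 := q - (dt / 2) *: (A *m (y + d)) in
  dot p1 p1 + dot (y + d) (A *m (y + d)) = dot p0 p0 + dot y (A *m y).
Proof.
move=> AT qE p0 p1; rewrite /p0 /p1 mulmxDr.
have symA u w : dot u (A *m w) = dot w (A *m u) by rewrite -dot_mulmx_sym // dotC.
have qA w : dt * dot q (A *m w) = dot d (A *m w) + dt ^+ 2 / 4 * dot d (A *m (A *m w)).
  by rewrite -dotZl qE dotDl dotZl dot_mulmx_sym.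
have := qA y; have := qA d.
rewrite !(dotDl, dotDr, dotZl, dotZr, dotNl, dotNr) !dot_mulmx_sym //.
rewrite (symA y q) (symA d q) (symA d y) (symA d (A *m y)) !dot_mulmx_sym //.
lra.
Qed.

Lemma HamE (R : realFieldType) (n : nat) (B : 'M[R]_n) (xbar x p : 'cV[R]_n) :
  Ham B xbar x p =
  2^-1 * (dot p p + dot (x - xbar) (invmx B *m (x - xbar))).
Proof. by rewrite /Ham /Vpot /dot mulrDr -mulmxA. Qed.

Theorem mainTheorem16 (R : realFieldType) (n : nat) (B : 'M[R]_n)
    (xbar : 'cV[R]_n) (dt : R) (xn pn : 'cV[R]_n) :
  sym_posdef B -> 0 < dt ->
  let ph := pn - (dt / 2) *: gradV B xbar xn in
  let xn1 := xn + dt *: (invmx (Mtilde B dt) *m ph) in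
  let pn1 := ph - (dt / 2) *: gradV B xbar xn1 in
  Ham B xbar xn1 pn1 = Ham B xbar xn pn.
Proof.
move=> Bspd dt_gt0 ph xn1 pn1.
have Aspd := sym_posdef_invmx Bspd; have [AT _] := Aspd.
have Mspd : sym_posdef (Mtilde B dt).
  by apply: sym_posdef_1D Aspd; rewrite divr_gt0 // exprn_gt0.
set d := dt *: (invmx (Mtilde B dt) *m ph).
have phE : dt *: ph = d + (dt ^+ 2 / 4) *: (invmx B *m d).
  rewrite scalemxAl -[d in d + _]mul1mx -mulmxDl -/(Mtilde B dt).
  by rewrite /d -scalemxAr mulmxA mulmxV ?mul1mx // sym_posdef_unitmx.
have x1E : xn1 - xbar = (xn - xbar) + d by rewrite /xn1 -/d addrAC.
have pnE : pn = ph + (dt / 2) *: (invmx B *m (xn - xbar)) by rewrite subrK.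
by rewrite !HamE x1E pnE /pn1 /gradV x1E leapfrog_quadratic_energy.
Qed.
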